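(* In the setting of the context, let $\omega=i\omega_\Im$ with $\omega_\Im\in\mathbb{R}$ and $\omega\notin\{0,\delta_+,\delta_-\}$. Then $\omega\in W_\Omega(T)$ if and only if at least one of the following holds: $$-\omega_\Im^2-\frac{\omega_\Im^2}{c+d\omega_\Im+\omega_\Im^2}\inf W(B)\in\overline{W(A)},\qquad -\omega_\Im^2-\frac{\omega_\Im^2}{c+d\omega_\Im+\omega_\Im^2}\sup W(B)\in\overline{W(A)},$$ $$-\frac{c+d\omega_\Im+\omega_\Im^2}{\omega_\Im^2}\bigl(\omega_\Im^2+\inf W(A)\bigr)\in\overline{W(B)}.$$
   Context: Let $\mathcal{H}$ be a Hilbert space, $A$ a selfadjoint (possibly unbounded) operator in $\mathcal{H}$ and $B$ a nonzero bounded selfadjoint operator. Let $c\ge0$, $d>0$, $\delta_\pm:=\pm\sqrt{c-d^2/4}-id/2$ (principal square root). $W(A),W(B)\subset\mathbb{R}$ are the numerical ranges. For real $\alpha,\beta$ let $p_{(\alpha,\beta)}(\omega):=(\alpha-\omega^2)(c-id\omega-\omega^2)-\beta\omega^2$ with roots $r_1,\dots,r_4$ labelled continuously in $(\alpha,\beta)$ and extended by limits to $\overline{\mathbb{R}}\times\mathbb{R}$ ($\overline{\mathbb{R}}=\mathbb{R}\cup\{\pm\infty\}$), values in $\overline{\mathbb{C}}=\mathbb{C}\cup\{\infty\}$. Let $\Omega:=\overline{W(A)}\times\overline{W(B)}$ (closure of $W(A)$ in $\overline{\mathbb{R}}$) and $W_\Omega(T):=\bigcup_{n=1}^4\bigcup_{(\alpha,\beta)\in\Omega}r_n(\alpha,\beta)$.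 *)

From mathcomp Require Import all_boot all_order all_algebra.
From mathcomp Require Import all_classical all_reals all_analysis.
From mathcomp Require Import complex.
Import Order.TTheory GRing.Theory Num.Theory.
Import numFieldNormedType.Exports.
Local Open Scope classical_set_scope.
Local Open Scope ring_scope.
Local Open Scope complex_scope.

Set Implicit Arguments.
Unset Strict Implicit.
Unset Printing Implicit Defensive.

Section Defs.
Variable R : realType.

Variable V : lmodType R[i].
Variable ip : V -> V -> R[i].

Definition hnorm (x : V) : R := Num.sqrt (complex.Re (ip x x)).

Definition is_hilbert_space : Prop :=
  [/\ (forall (a : R[i]) (x y z : V), ip (a *: x + y) z = a * ip x z + ip y z),
      (forall x y : V, ip y x = (ip x y)^*),
      (forall x : V, x != 0 -> 0 < ip x x) &
      (forall u : nat -> V,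
         (forall e : R, 0 < e -> exists N : nat, forall m n : nat,
              (N <= m)%N -> (N <= n)%N -> hnorm (u m - u n) < e) ->
         exists l : V, forall e : R, 0 < e -> exists N : nat, forall n : nat,
              (N <= n)%N -> hnorm (u n - l) < e)].

(* y in dom(A^adj) with A^adj y = z  iff  y in D and A y = z. *)
Definition is_selfadjoint (D : set V) (A : V -> V) : Prop :=
  [/\ D 0,
      (forall (a : R[i]) (x y : V), D x -> D y -> D (a *: x + y)),
      (forall (a : R[i]) (x y : V), D x -> D y -> A (a *: x + y) = a *: A x + A y),
      (forall (x : V) (e : R), 0 < e -> exists y : V, D y /\ hnorm (x - y) < e) &
      (forall y z : V, (forall x : V, D x -> ip (A x) y = ip x z) <-> (D y /\ A y = z))].

Definition is_bounded_selfadjoint (B : V -> V) : Prop :=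
  [/\ (forall (a : R[i]) (x y : V), B (a *: x + y) = a *: B x + B y),
      (exists M : R, forall x : V, hnorm (B x) <= M * hnorm x) &
      (forall x y : V, ip (B x) y = ip x (B y))].

(* Numerical range W(A) = { <Ax,x> : x \in dom A, ||x|| = 1 }, which is
   real for symmetric A; we record it as a subset of R. *)
Definition numrange (D : set V) (A : V -> V) : set R :=
  [set r : R | exists x : V, [/\ D x, ip x x = 1 & ip (A x) x = r%:C]].

End Defs.

Definition eclosure (R : realType) (S : set R) : set (\bar R) :=
  closure [set x%:E | x in S].

Definition einf (R : realType) (S : set R) : \bar R := ereal_inf [set x%:E | x in S].
Definition esup (R : realType) (S : set R) : \bar R := ereal_sup [set x%:E | x in S].

Definition psqrt (R : realType) (x : R) : R[i] :=
  if 0 <= x then (Num.sqrt x)%:C else 'i * (Num.sqrt (- x))%:C.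

Definition delta_p (R : realType) (c d : R) : R[i] :=
  psqrt (c - d ^+ 2 / 4%:R) - 'i * (d / 2%:R)%:C.
Definition delta_m (R : realType) (c d : R) : R[i] :=
  - psqrt (c - d ^+ 2 / 4%:R) - 'i * (d / 2%:R)%:C.

Definition pab (R : realType) (c d alpha beta : R) (w : R[i]) : R[i] :=
  (alpha%:C - w ^+ 2) * (c%:C - 'i * d%:C * w - w ^+ 2) - beta%:C * w ^+ 2.

(* Extended complex plane: Some z = z \in C, None = infinity.
   Convergence of a complex sequence to a point of the extended plane. *)
Definition cvg_ext (R : realType) (w : nat -> R[i]) (z : option R[i]) : Prop :=
  match z with
  | Some z0 => forall e : R, 0 < e -> exists N : nat, forall k : nat,
                 (N <= k)%N -> `|w k - z0| < e%:C
  | None => forall M : R, exists N : nat, forall k : nat,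
                 (N <= k)%N -> M%:C < `|w k|
  end.

(* r is a value r_n(alpha, beta) of one of the (continuously labelled)
   roots of p_(alpha,beta), extended by limits to alpha = +-oo:
   r is a limit (in the extended plane) of roots w_k of p_(a_k,b_k) with
   (a_k, b_k) -> (alpha, beta) in \bar R x R. *)
Definition root_value (R : realType) (c d : R) (alpha : \bar R) (beta : R)
    (r : option R[i]) : Prop :=
  exists (a b : nat -> R) (w : nat -> R[i]),
    [/\ (fun k => (a k)%:E) @ \oo --> alpha,
        b @ \oo --> beta,
        (forall k, pab c d (a k) (b k) (w k) = 0) &
        cvg_ext w r].

Definition WOmega (R : realType) (c d : R) (WA WB : set R) : set (option R[i]) :=
  [set r | exists (alpha : \bar R) (beta : R),
       [/\ eclosure WA alpha, closure WB beta & root_value c d alpha beta r]].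

From HB Require Import structures.
From mathcomp Require Import all_boot all_order all_algebra.
From mathcomp Require Import all_classical all_reals all_analysis.
From mathcomp Require Import complex.
From mathcomp Require Import ring lra.
Import Order.TTheory GRing.Theory Num.Theory.
Import numFieldNormedType.Exports.
Local Open Scope classical_set_scope.
Local Open Scope ring_scope.
Local Open Scope complex_scope.

Set Implicit Arguments.
Unset Strict Implicit.
Unset Printing Implicit Defensive.

(* For w = i t one computes p_(a,b)(i t) = ((a + t^2) k + b t^2)%:C with
   k = c + d t + t^2, and k <> 0 because i t is not one of delta_+-.
   Hence i t lies in W_Omega(T) iff the line (a + t^2) k + b t^2 = 0 meets
   closure W(A) x closure W(B): along roots w_n -> i t of p_(a_n,b_n), solving
   for a_n shows that a_n converges, so alpha is finite.  Both numerical ranges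
   are intervals (a real Toeplitz-Hausdorff argument: the quadratic form
   <A z, z> - r <z, z> changes sign along a segment, so it vanishes by the
   intermediate value theorem), and closure W(B) = [inf W(B), sup W(B)] is
   compact.  So the line meets the product iff an endpoint of the image of
   closure W(B) lies in closure W(A), or else closure W(A) sits strictly inside
   that image; then inf W(A) is finite and corresponds to a point of
   closure W(B). *)

(* mathcomp-analysis puts a norm topology on the regular module of a
   numClosedFieldType, but not on R[i] itself. *)
HB.instance Definition _ (R : rcfType) :=
  NormedModule.copy R[i] (R[i] : numClosedFieldType)^o.

Section ComplexFacts.
Variable R : realType.

Lemma gt0_complex_real (e : R[i]) :
  0 < e -> e = (complex.Re e)%:C /\ 0 < complex.Re e.
Proof. by case: e => a b; rewrite ltcE /= => /andP[/eqP-> ->]. Qed.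

Lemma normc_real (x : R) : `|x%:C| = `|x|%:C.
Proof. by rewrite normc_def /= expr0n addr0 sqrtr_sqr. Qed.

Lemma conjR (a : R) : Num.conj (a%:C) = a%:C.
Proof. exact: conjc_real. Qed.

Lemma psqrt_Nsqr (x : R) : psqrt (- x ^+ 2) = 'i * `|x|%:C.
Proof.
rewrite /psqrt oppr_ge0; case: ifP => [x2_le0|_]; last by rewrite opprK sqrtr_sqr.
have -> : x = 0 by apply/eqP; rewrite -sqrf_eq0 eq_le x2_le0 sqr_ge0.
by rewrite expr0n oppr0 sqrtr0 normr0 mulr0.
Qed.

Lemma imag_eq_delta (c d t : R) : c + d * t + t ^+ 2 = 0 ->
  'i * t%:C = delta_p c d \/ 'i * t%:C = delta_m c d.
Proof.
move=> k0; have e : c - d ^+ 2 / 4 = - (t + d / 2) ^+ 2.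
  by rewrite (_ : c = - (d * t) - t ^+ 2); [field | lra].
rewrite /delta_p /delta_m e psqrt_Nsqr.
have [w0|w0] := lerP 0 (t + d / 2); [left|right].
  by rewrite ger0_norm // -mulrBr -rmorphB; congr (_ * _%:C); field.
by rewrite ltr0_norm // -mulrN -mulrBr -rmorphN -rmorphB; congr (_ * _%:C); field.
Qed.

End ComplexFacts.

Section RealSets.
Variable R : realType.
Implicit Types (S : set R) (m x : R).

Lemma eclosure_EFin S x : eclosure S x%:E = closure S x.
Proof.
rewrite propeqE; split=> Sx B.
  move=> /nbhs_image_EFin/Sx [_ [[y Sy <-] [z Bz zy]]].
  by exists y; split; rewrite // -(EFin_inj zy).
move=> /nbhs_EFin/Sx [y [Sy By]].
by exists y%:E; split => //; exists y.
Qed.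

Lemma closure_lbound S m : lbound S m -> lbound (closure S) m.
Proof. by move=> mS x /(closureS mS); rewrite -(closure_id _).1 //; exact: closed_ge. Qed.

Lemma closure_ubound S m : ubound S m -> ubound (closure S) m.
Proof. by move=> Sm x /(closureS Sm); rewrite -(closure_id _).1 //; exact: closed_le. Qed.

Lemma closure_inf S : S !=set0 -> has_lbound S -> closure S (inf S).
Proof.
move=> S0 lbS B /nbhs_ballP[e e0 eB].
have [y Sy ye] := inf_adherent e0 (conj S0 lbS).
exists y; split => //; apply: eB; rewrite /ball /= ler0_norm; last first.
  by rewrite subr_le0 ge_inf.
by rewrite opprB ltrBlDl.
Qed.

Lemma is_interval_closure S : is_interval S -> is_interval (closure S).
Proof. by move=> /connected_intervalP/connected_closure/connected_intervalP. Qed.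

Lemma closure_bounded_interval S x : is_interval S -> S !=set0 ->
  has_lbound S -> has_ubound S -> closure S x <-> inf S <= x <= sup S.
Proof.
move=> iS S0 lbS ubS; split=> [Sx | /andP[infx xsup]].
  rewrite (closure_lbound (ge_inf lbS) Sx).
  exact: (closure_ubound (sup_upper_bound (conj S0 ubS)) Sx).
apply: (is_interval_closure iS (closure_inf S0 lbS) (closure_sup S0 ubS)).
by rewrite infx.
Qed.

Lemma einf_EFin S m : einf S = m%:E -> [/\ S !=set0, has_lbound S & inf S = m].
Proof.
move=> Sm; have lbS : lbound S m.
  by move=> x Sx; rewrite -lee_fin -Sm; apply: ereal_inf_lbound; exists x.
have S0 : S !=set0.
  apply/set0P/eqP => S0; move: Sm; rewrite /einf S0 image_set0 ereal_inf0.
  by [].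
split=> //; first by exists m.
by apply: EFin_inj; rewrite -ereal_inf_EFin //; exists m.
Qed.

Lemma eclosure_bounded_fin S (y : \bar R) : has_lbound S -> has_ubound S ->
  eclosure S y -> y \is a fin_num.
Proof.
move=> [m mS] [M SM]; case: y => // Sy.
  have [_ [[x Sx <-]]] := Sy _ (ereal_nbhs_pinfty_gt (num_real M)).
  by rewrite lte_fin ltNge SM.
have [_ [[x Sx <-]]] := Sy _ (ereal_nbhs_ninfty_lt (num_real m)).
by rewrite lte_fin ltNge mS.
Qed.

Lemma fin_num_EFinM (s : R) (y : \bar R) : s != 0 ->
  ((s%:E * y)%E \is a fin_num) = (y \is a fin_num).
Proof.
move=> s0; case: y => [y||] //=; rewrite mulr_infty;
  by case: sgrP s0 => //= _ _; rewrite ?mul1e ?mulN1e.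
Qed.

Lemma segment_affine_image (u r m M x : R) : r != 0 -> m <= M ->
  (exists2 b, m <= b <= M & x = u + r * b) <->
  Num.min (u + r * m) (u + r * M) <= x <= Num.max (u + r * m) (u + r * M).
Proof.
move=> r0 mM; have xE : x = u + r * ((x - u) / r) by field.
have [r_lt0|r_gt0] : r < 0 \/ 0 < r by case: (ltgtP r 0) r0 => // rs _; [left|right].
- have hM : u + r * M <= u + r * m by rewrite lerD2l ler_nM2l.
  rewrite (min_idPr hM) (max_idPl hM); split=> [[b /andP[mb bM] ->]|].
    by rewrite !lerD2l !ler_nM2l // bM.
  by rewrite {1 2}xE !lerD2l !ler_nM2l // andbC => hb; exists ((x - u) / r).
- have hm : u + r * m <= u + r * M by rewrite lerD2l ler_pM2l.
  rewrite (min_idPl hm) (max_idPr hm); split=> [[b /andP[mb bM] ->]|].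
    by rewrite !lerD2l !ler_pM2l // mb.
  by rewrite {1 2}xE !lerD2l !ler_pM2l // => hb; exists ((x - u) / r).
Qed.

Lemma interval_meets_segment S lo hi : is_interval S ->
  (exists2 x, closure S x & Num.min lo hi <= x <= Num.max lo hi) <->
  [\/ closure S lo, closure S hi |
      exists2 m, einf S = m%:E & Num.min lo hi <= m <= Num.max lo hi].
Proof.
move=> iS; wlog lohi : lo hi / lo <= hi.
  move=> gen; have [|/negbTE hilo] := boolP (lo <= hi); first exact: gen.
  rewrite minC maxC; apply: iff_trans (gen _ _ _) _; first by rewrite ltW // ltNge hilo.
  by split; case=> h; [apply: Or32|apply: Or31|apply: Or33|apply: Or32|apply: Or31|apply: Or33].
rewrite (min_idPl lohi) (max_idPr lohi); split; last first.
  case=> [Slo|Shi|[m /einf_EFin[S0 lbS <-] hm]].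
  - by exists lo; rewrite // lexx.
  - by exists hi; rewrite // lexx andbT.
  - by exists (inf S) => //; exact: closure_inf.
move=> [x Sx /andP[lox xhi]].
have [Slo|nSlo] := pselect (closure S lo); first exact: Or31.
have [Shi|nShi] := pselect (closure S hi); first exact: Or32.
have below_lo y : closure S y -> lo <= y.
  move=> Sy; rewrite leNgt; apply/negP => ylo; apply: nSlo.
  by apply: (is_interval_closure iS Sy Sx); rewrite (ltW ylo).
apply: Or33; case E: (einf S) => [m||].
- have [S0 lbS infm] := einf_EFin E; exists m => //.
  have mx : m <= x by rewrite -infm; exact: (closure_lbound (ge_inf lbS)).
  have Sm : closure S m by rewrite -infm; exact: closure_inf.
  by rewrite below_lo // (le_trans mx xhi).
- have [y [Sy _]] := Sx _ filterT.
  by have := (ereal_inf_pinfty _).1 E y%:E (ex_intro2 _ _ y Sy erefl).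
- have /ereal_inf_lt[_ [y Sy <-]] : (einf S < lo%:E)%E by rewrite E ltNyr.
  by rewrite lte_fin ltNge below_lo //; exact: subset_closure.
Qed.

Lemma line_meets_closures (SA SB : set R) (t k : R) : t != 0 -> k != 0 ->
  is_interval SA -> is_interval SB -> SB !=set0 -> has_lbound SB -> has_ubound SB ->
  (exists x b, [/\ closure SA x, closure SB b & (x + t ^+ 2) * k + b * t ^+ 2 = 0]) <->
  [\/ eclosure SA ((- t ^+ 2)%:E - ((t ^+ 2 / k)%:E * einf SB))%E,
      eclosure SA ((- t ^+ 2)%:E - ((t ^+ 2 / k)%:E * esup SB))%E |
      eclosure SB ((- (k / t ^+ 2))%:E * ((t ^+ 2)%:E + einf SA))%E].
Proof.
move=> t0 k0 iA iB B0 lbB ubB; set m := inf SB; set M := sup SB.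
have clB b : closure SB b <-> m <= b <= M by exact: closure_bounded_interval.
have mM : m <= M by case: B0 => b /subset_closure/clB/andP[/le_trans]; apply.
pose f b := - t ^+ 2 + - (t ^+ 2 / k) * b.
have f0 : - (t ^+ 2 / k) != 0 by rewrite oppr_eq0 mulf_neq0 ?invr_eq0 ?sqrf_eq0.
have g0 : - (k / t ^+ 2) != 0 by rewrite oppr_eq0 mulf_neq0 ?invr_eq0 ?sqrf_eq0.
have fK b : - (k / t ^+ 2) * (t ^+ 2 + f b) = b by rewrite /f; field; apply/andP.
have eqnE x b : (x + t ^+ 2) * k + b * t ^+ 2 = 0 <-> x = f b.
  split=> [eq0|->]; last by rewrite /f; field.
  have -> : x = ((x + t ^+ 2) * k + b * t ^+ 2) / k + f b by rewrite /f; field.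
  by rewrite eq0 mul0r add0r.
have fE b : - t ^+ 2 - t ^+ 2 / k * b = f b by rewrite /f mulNr.
rewrite [einf SB]ereal_inf_EFin // [esup SB]ereal_sup_EFin //.
rewrite -!EFinM -!EFinB !eclosure_EFin !fE.
apply: (@iff_trans _
  (exists2 x, closure SA x & Num.min (f m) (f M) <= x <= Num.max (f m) (f M))).
  split=> [[x [b [Ax /clB hb /eqnE xb]]] | [x Ax]].
    by exists x => //; apply/(segment_affine_image _ _ f0 mM); exists b.
  by move=> /(segment_affine_image _ _ f0 mM)[b /clB hb /eqnE xb]; exists x, b; split.
apply: iff_trans (interval_meets_segment _ _ iA) _.
split; case=> h; [exact: Or31|exact: Or32|apply: Or33|exact: Or31|exact: Or32|apply: Or33].
  move: h => [a -> /(segment_affine_image _ _ f0 mM)[b hb ab]].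
  by rewrite -EFinD -EFinM eclosure_EFin ab fK; exact/clB.
have finA : einf SA \is a fin_num.
  by have := eclosure_bounded_fin lbB ubB h; rewrite fin_num_EFinM // fin_numD => /andP[].
move: h; rewrite -(fineK finA) -EFinD -EFinM eclosure_EFin => /clB hb.
exists (fine (einf SA)) => //; apply/(segment_affine_image _ _ f0 mM).
by exists (- (k / t ^+ 2) * (t ^+ 2 + fine (einf SA))) => //; rewrite /f; field; apply/andP.
Qed.

End RealSets.

Section InnerProduct.
Variables (R : realType) (V : lmodType R[i]) (ip : V -> V -> R[i]).
Hypothesis hH : is_hilbert_space ip.

Lemma ip_linearl a x y z : ip (a *: x + y) z = a * ip x z + ip y z.
Proof. by case: hH. Qed.

Lemma ipC x y : ip y x = Num.conj (ip x y).
Proof. by case: hH. Qed.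

Lemma ipDl x y z : ip (x + y) z = ip x z + ip y z.
Proof. by have := ip_linearl 1 x y z; rewrite scale1r mul1r. Qed.

Lemma ip0l z : ip 0 z = 0.
Proof. by apply: (addrI (ip 0 z)); rewrite -ipDl !addr0. Qed.

Lemma ipZl a x z : ip (a *: x) z = a * ip x z.
Proof. by have := ip_linearl a x 0 z; rewrite !addr0 ip0l addr0. Qed.

Lemma ipDr x y z : ip z (x + y) = ip z x + ip z y.
Proof. by rewrite !(ipC _ z) ipDl rmorphD. Qed.

Lemma ipZr a x z : ip z (a *: x) = Num.conj a * ip z x.
Proof. by rewrite !(ipC _ z) ipZl rmorphM. Qed.

Lemma ipZZ (a : R) x y : ip (a%:C *: x) (a%:C *: y) = (a ^+ 2)%:C * ip x y.
Proof. by rewrite ipZl ipZr conjR mulrA -rmorphM -expr2. Qed.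

Lemma ip_combR (a b : R) x y x' y' :
  ip (a%:C *: x + b%:C *: y) (a%:C *: x' + b%:C *: y') =
  (a ^+ 2)%:C * ip x x' + (a * b)%:C * (ip x y' + ip y x') + (b ^+ 2)%:C * ip y y'.
Proof. by rewrite !(ipDl, ipDr, ipZl, ipZr) !conjR !expr2 !rmorphM; ring. Qed.

Lemma ip_gt0 x : x != 0 ->
  ip x x = (complex.Re (ip x x))%:C /\ 0 < complex.Re (ip x x).
Proof. by case: hH => _ _ ipP _ /ipP/gt0_complex_real. Qed.

Lemma ip_ge0 x : ip x x = (complex.Re (ip x x))%:C /\ 0 <= complex.Re (ip x x).
Proof.
have [->|/ip_gt0[-> /ltW //]] := eqVneq x 0.
by rewrite ip0l.
Qed.

Lemma unit_rescale x : x != 0 -> exists c : R, ip (c%:C *: x) (c%:C *: x) = 1.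
Proof.
move=> /ip_gt0[xx n0]; exists (Num.sqrt (complex.Re (ip x x)))^-1.
by rewrite ipZZ xx -rmorphM exprVn sqr_sqrtr ?ltW // mulVf ?gt_eqF.
Qed.

Definition symmetric_on (D : set V) (A : V -> V) : Prop :=
  [/\ D 0, (forall (a : R[i]) x y, D x -> D y -> D (a *: x + y)),
      (forall (a : R[i]) x y, D x -> D y -> A (a *: x + y) = a *: A x + A y) &
      (forall x y, D x -> D y -> ip (A x) y = ip x (A y))].

Lemma selfadjoint_symmetric D A : is_selfadjoint ip D A -> symmetric_on D A.
Proof. by case=> D0 DD AL _ adj; split=> // x y Dx Dy; apply: (adj y (A y)).2. Qed.

Lemma bounded_selfadjoint_symmetric B :
  is_bounded_selfadjoint ip B -> symmetric_on setT B.
Proof. by case=> BL _ Bs; split. Qed.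

Section Symmetric.
Variables (D : set V) (A : V -> V).
Hypothesis hA : symmetric_on D A.

Lemma symD x y : D x -> D y -> D (x + y).
Proof. by case: hA => _ DL _ _ Dx Dy; have := DL 1 x y Dx Dy; rewrite scale1r. Qed.

Lemma symZ a x : D x -> D (a *: x).
Proof. by case: hA => D0 DL _ _ Dx; have := DL a x 0 Dx D0; rewrite addr0. Qed.

Lemma symA0 : A 0 = 0.
Proof.
case: hA => D0 _ AL _; have := AL 1 0 0 D0 D0; rewrite scaler0 scale1r addr0 => h.
by apply: (addrI (A 0)); rewrite -h addr0.
Qed.

Lemma symAD x y : D x -> D y -> A (x + y) = A x + A y.
Proof. by case: hA => _ _ AL _ Dx Dy; have := AL 1 x y Dx Dy; rewrite !scale1r. Qed.

Lemma symAZ a x : D x -> A (a *: x) = a *: A x.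
Proof.
by case: hA => D0 _ AL _ Dx; have := AL a x 0 Dx D0; rewrite !addr0 symA0 addr0.
Qed.

Lemma ipA_real x : D x -> ip (A x) x = (complex.Re (ip (A x) x))%:C.
Proof. by case: hA => _ _ _ As Dx; apply/esym/RRe_real; rewrite CrealE -ipC As. Qed.

Lemma numrange_neq0 : (exists2 x, D x & x != 0) -> numrange ip D A !=set0.
Proof.
move=> [x Dx /unit_rescale[c u1]]; have Du := symZ (c%:C) Dx.
exists (complex.Re (ip (A (c%:C *: x)) (c%:C *: x))), (c%:C *: x).
by split; last exact: ipA_real.
Qed.

Lemma proportional_unit_vectors x y (a b : R) : D x -> D y ->
  ip x x = 1 -> ip y y = 1 -> ip (A x) x != ip (A y) y ->
  a%:C *: x = b%:C *: y -> a = 0 /\ b = 0.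
Proof.
move=> Dx Dy x1 y1 rxy axby.
have /complexI ab : (a ^+ 2)%:C = (b ^+ 2)%:C :> R[i].
  by have := congr1 (fun v => ip v v) axby; rewrite /= !ipZZ x1 y1 !mulr1.
have := congr1 (fun v => ip (A v) v) axby; rewrite /= !symAZ // !ipZZ -ab => /eqP.
rewrite -subr_eq0 -mulrBr mulf_eq0 subr_eq0 (negbTE rxy) orbF => /eqP/complexI a0.
by move: ab; rewrite a0 => /esym/eqP; move: a0 => /eqP; rewrite !sqrf_eq0 => /eqP-> /eqP->.
Qed.

Lemma quadratic_form_segment x y (r1 r2 r s : R) : D x -> D y ->
  ip x x = 1 -> ip y y = 1 -> ip (A x) x = r1%:C -> ip (A y) y = r2%:C ->
  let z := (1 - s)%:C *: x + s%:C *: y in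
  ip (A z) z - r%:C * ip z z =
  ((1 - s) ^+ 2 * (r1 - r) + (1 - s) * s * (2 * complex.Re (ip (A x) y - r%:C * ip x y))
   + s ^+ 2 * (r2 - r))%:C.
Proof.
move=> Dx Dy x1 y1 Ax Ay z; have [_ _ _ As] := hA.
set h := ip (A x) y - r%:C * ip x y.
have cross : ip (A x) y + ip (A y) x - r%:C * (ip x y + ip y x) = (2 * complex.Re h)%:C.
  rewrite (ipC x (A y)) -As // (ipC x y) /h.
  case: (ip (A x) y) => p1 p2; case: (ip x y) => n1 n2.
  by apply/eqP; rewrite eq_complex /=; simpc; rewrite andbT; apply/eqP; ring.
rewrite /z symAD ?symAZ //; try exact: symZ.
rewrite !ip_combR Ax Ay x1 y1.
have e : ((1 - s) * s)%:C * (ip (A x) y + ip (A y) x - r%:C * (ip x y + ip y x)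
           - (2 * complex.Re h)%:C) = 0 by rewrite cross subrr mulr0.
by apply/eqP; rewrite -subr_eq0 -e; apply/eqP; ring.
Qed.

Lemma numrange_is_interval : is_interval (numrange ip D A).
Proof.
apply/is_intervalPlt => r1 r2 [x [Dx x1 Ax]] [y [Dy y1 Ay]] r /andP[r1r rr2].
pose z s := (1 - s)%:C *: x + s%:C *: y.
set c := complex.Re (ip (A x) y - r%:C * ip x y).
pose P s := (1 - s) ^+ 2 * (r1 - r) + (1 - s) * s * (2 * c) + s ^+ 2 * (r2 - r).
have cP : continuous P.
  pose p : {poly R} :=
    (1 - 'X) ^+ 2 * (r1 - r)%:P + (1 - 'X) * 'X * (2 * c)%:P + 'X ^+ 2 * (r2 - r)%:P.
  have -> : P = horner p by apply/funext => s; rewrite /P /p !hornerE.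
  exact: continuous_horner.
have [s0 _ Ps0] : exists2 s0, s0 \in `[0, 1] & P s0 = 0.
  apply: IVT => //; first exact: continuous_subspaceT.
  rewrite /P !(subr0, subrr, expr0n, expr1n, mul0r, mulr0, mul1r, add0r, addr0) /=.
  by rewrite ge_min le_max !subr_le0 !subr_ge0 (ltW r1r) (ltW rr2) orbT.
have z0 : z s0 != 0.
  apply/eqP => /eqP; rewrite addr_eq0 -scaleNr -rmorphN => /eqP.
  move/(proportional_unit_vectors Dx Dy x1 y1); rewrite Ax Ay (inj_eq (@complexI _)).
  by rewrite lt_eqF ?(lt_trans r1r rr2) // => /(_ isT)[]; lra.
have [k u1] := unit_rescale z0.
have Dz : D (z s0) by apply: symD; apply: symZ.
exists (k%:C *: z s0); split; [exact: symZ | exact: u1 |].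
have : ip (A (z s0)) (z s0) = r%:C * ip (z s0) (z s0).
  by apply/eqP; rewrite -subr_eq0 (quadratic_form_segment r s0 Dx Dy x1 y1 Ax Ay) -/c -/(P s0) Ps0.
by rewrite symAZ // ipZZ => ->; rewrite mulrCA -ipZZ u1 mulr1.
Qed.

End Symmetric.

Lemma numrange_bounded B : is_bounded_selfadjoint ip B ->
  has_lbound (numrange ip setT B) /\ has_ubound (numrange ip setT B).
Proof.
case=> _ [M hM] Bs.
suff bnd r : numrange ip setT B r -> `|r| <= (1 + M ^+ 2) / 2.
  by split; [exists (- ((1 + M ^+ 2) / 2)) | exists ((1 + M ^+ 2) / 2)] => r /bnd;
    rewrite ler_norml => /andP[].
(* Positivity of <x +- Bx, x +- Bx> gives |<Bx, x>| <= (1 + |Bx|^2) / 2. *)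
move=> [x [_ x1 Bx]]; have [qE q0] := ip_ge0 (B x); set q := complex.Re _ in qE q0.
have qM : q <= M ^+ 2.
  have := hM x; rewrite /hnorm x1 /= sqrtr1 mulr1 -/q => qM.
  by have := sqr_sqrtr q0; have := sqrtr_ge0 q; nra.
have pos s : 0 <= 1 + 2 * s * r + s ^+ 2 * q.
  have e : ip (1%:C *: x + s%:C *: B x) (1%:C *: x + s%:C *: B x) =
           (1 + 2 * s * r + s ^+ 2 * q)%:C by rewrite ip_combR x1 qE -Bs Bx; ring.
  by have [_] := ip_ge0 (1%:C *: x + s%:C *: B x); rewrite e.
have := pos 1; have := pos (-1); rewrite ler_norml; lra.
Qed.

End InnerProduct.

Section ImaginaryAxis.
Variable R : realType.

Lemma cvg_extE (w : nat -> R[i]) (z : R[i]) : cvg_ext w (Some z) <-> w @ \oo --> z.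
Proof.
split=> [hw | /cvgrPdist_lt hw e e0]; last first.
  by have [N _ hN] := hw _ (etrans (ltcR 0 e) e0); exists N => n /hN; rewrite distrC.
apply/cvgrPdist_lt => e /gt0_complex_real[-> e0].
by have [N hN] := hw _ e0; exists N => // n /hN; rewrite distrC.
Qed.

Lemma cvg_realC (u : nat -> R) (x : R) :
  (fun n => (u n)%:C) @ \oo --> x%:C <-> u @ \oo --> x.
Proof.
rewrite !cvgrPdist_lt; split=> hu e e0.
  by apply: filterS (hu _ (etrans (ltcR 0 e) e0)) => n; rewrite -rmorphB normc_real ltcR.
have [-> e0'] := gt0_complex_real e0.
by apply: filterS (hu _ e0') => n; rewrite -rmorphB normc_real ltcR.
Qed.

Lemma pab_imag (c d a b t : R) :
  pab c d a b ('i * t%:C) = ((a + t ^+ 2) * (c + d * t + t ^+ 2) + b * t ^+ 2)%:C.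
Proof. by apply/eqP; rewrite eq_complex /=; simpc. Qed.

Lemma pab_roots_cvg (c d t beta : R) (a b : nat -> R) (w : nat -> R[i]) :
  c + d * t + t ^+ 2 != 0 -> (forall n, pab c d (a n) (b n) (w n) = 0) ->
  w @ \oo --> 'i * t%:C -> b @ \oo --> beta ->
  a @ \oo --> - t ^+ 2 - t ^+ 2 / (c + d * t + t ^+ 2) * beta.
Proof.
set k := c + d * t + t ^+ 2 => k0 hp hw hb; apply/cvg_realC.
pose q z := c%:C - 'i * d%:C * z - z * z.
have q_cvg : q \o w @ \oo --> k%:C.
  have -> : k%:C = q ('i * t%:C) by apply/eqP; rewrite eq_complex /=; simpc.
  by apply: cvgB; [apply: cvgB; [exact: cvg_cst|apply: cvgM; [exact: cvg_cst|]]|apply: cvgM].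
have kC0 : k%:C != 0 :> R[i] by apply: contra_neq k0 => /complexI.
have a_eq : \forall n \near \oo, w n * w n * (1 + (b n)%:C / q (w n)) = (a n)%:C.
  near=> n.
  have qn0 : q (w n) != 0 by near: n; exact: cvgr_neq0 _ q_cvg kC0.
  have := hp n; rewrite /pab expr2 -/(q (w n)) => pn0.
  have -> : (a n)%:C = (((a n)%:C - w n * w n) * q (w n) - (b n)%:C * (w n * w n)) / q (w n)
                        + w n * w n * (1 + (b n)%:C / q (w n)) by field.
  by rewrite pn0 mul0r add0r.
have -> : (- t ^+ 2 - t ^+ 2 / k * beta)%:C =
          ('i * t%:C) * ('i * t%:C) * (1 + beta%:C / k%:C).
  apply/eqP; rewrite eq_complex /=; simpc.
  by rewrite expr0n addr0 andbT; apply/eqP; field.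
apply: cvg_trans (near_eq_cvg a_eq) _.
apply: cvgM; first exact: (cvgM hw hw).
apply: cvgD; first exact: cvg_cst.
apply: cvgM; last exact: cvgV.
by apply/cvg_realC.
Unshelve. all: by end_near.
Qed.

Lemma WOmega_imagP (c d t : R) (WA WB : set R) :
  c + d * t + t ^+ 2 != 0 ->
  WOmega c d WA WB (Some ('i * t%:C)) <->
  exists x b, [/\ closure WA x, closure WB b &
                  (x + t ^+ 2) * (c + d * t + t ^+ 2) + b * t ^+ 2 = 0].
Proof.
move=> k0; split; last first.
  move=> [x [b [Ax Bb eq0]]]; exists x%:E, b; split; rewrite ?eclosure_EFin //.
  exists (fun=> x), (fun=> b), (fun=> 'i * t%:C); split; try exact: cvg_cst.
    by move=> _; rewrite pab_imag eq0.
  by apply/cvg_extE; exact: cvg_cst.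
move=> [alpha [beta [Aalpha Bbeta [a [b [w [ha hb hp /cvg_extE hw]]]]]]].
pose x := - t ^+ 2 - t ^+ 2 / (c + d * t + t ^+ 2) * beta.
have a_cvg : (fun n => (a n)%:E) @ \oo --> x%:E.
  by apply: cvg_EFin; [exact: nearW | exact: pab_roots_cvg k0 hp hw hb].
have ax := cvg_unique _ ha a_cvg.
exists x, beta; split => //; first by rewrite -eclosure_EFin -ax.
by rewrite /x; field.
Qed.

End ImaginaryAxis.

Theorem proposition2p4 (R : realType) (V : lmodType R[i]) (ip : V -> V -> R[i])
    (DA : set V) (A : V -> V) (B : V -> V) (c d t : R)
    (hH : is_hilbert_space ip)
    (hA : is_selfadjoint ip DA A)
    (hB : is_bounded_selfadjoint ip B)
    (hB0 : exists x : V, B x != 0)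
    (hc : 0 <= c) (hd : 0 < d)
    (hw0 : 'i * t%:C != 0)
    (hwp : 'i * t%:C != delta_p c d)
    (hwm : 'i * t%:C != delta_m c d) :
  let WA := numrange ip DA A in
  let WB := numrange ip setT B in
  let k := c + d * t + t ^+ 2 in
  WOmega c d WA WB (Some ('i * t%:C)) <->
  [\/ eclosure WA ((- t ^+ 2)%:E - ((t ^+ 2 / k)%:E * einf WB))%E,
      eclosure WA ((- t ^+ 2)%:E - ((t ^+ 2 / k)%:E * esup WB))%E |
      eclosure WB ((- (k / t ^+ 2))%:E * ((t ^+ 2)%:E + einf WA))%E].
Proof.
move=> WA WB k.
have t0 : t != 0 by apply: contraNneq hw0 => ->; rewrite mulr0.
have k0 : k != 0.
  by apply/eqP => /imag_eq_delta[] /eqP; [rewrite (negbTE hwp) | rewrite (negbTE hwm)].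
have symA := selfadjoint_symmetric hA.
have symB := bounded_selfadjoint_symmetric hB.
have WB0 : WB !=set0.
  have [x Bx0] := hB0; apply: (numrange_neq0 hH symB); exists x => //.
  by apply: contraNneq Bx0 => ->; rewrite (symA0 symB).
have [lbB ubB] := numrange_bounded hH hB.
apply: iff_trans (WOmega_imagP WA WB k0) _.
exact: line_meets_closures t0 k0 (numrange_is_interval hH symA)
  (numrange_is_interval hH symB) WB0 lbB ubB.
Qed.
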